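(* Let $A\in\mathbb{R}^{m\times n}_{\geq 0}$ be a matrix each of whose columns has at least one positive entry, and consider the covering LP $\min_{x\geq 0}\{\vec{1}^Tx : Ax\geq \vec{1}\}$ with optimal value $\mathrm{OPT}$. For each $i\in[n]$ let $a_i=\min_j\{A_{ji}:A_{ji}>0\}$, $r_i=\max_j\{A_{ji}:A_{ji}>0\}/a_i$, and $n_i=\max\{1,\lceil \log_2 r_i\rceil\}$. Define a new matrix $\bar{A}\in\mathbb{R}^{m\times(\sum_i n_i)}_{\geq 0}$ whose columns are indexed by pairs $(i,l)$ with $i\in[n]$, $l\in[n_i]$, by $$\bar{A}_{j,(i,l)}=\min\{A_{ji},\,2^l a_i\}.$$ Let $\overline{\mathrm{OPT}}$ be the optimal value of the LP $$\min\Big\{\sum_{i,l}\bar{x}_{(i,l)} \;:\; \bar{A}\bar{x}\geq\vec{1},\ \bar{x}\geq 0,\ \bar{x}_{(i,l)}\leq \frac{2}{2^l a_i}\ \text{for all } i\in[n],\ l\in[n_i]\Big\}.$$ Then $\mathrm{OPT}=\overline{\mathrm{OPT}}$.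
   Context: $\vec{1}$ denotes the all-ones vector. The new LP is obtained by duplicating column $i$ of $A$ $n_i$ times, capping the coefficients of the $l$-th copy at $2^l a_i$, and imposing an upper bound on each copied variable. *)

From HB Require Import structures.
From mathcomp Require Import all_boot all_order all_algebra.
From mathcomp Require Import all_classical all_reals.
From mathcomp Require Import ereal exp.
Set Implicit Arguments. Unset Strict Implicit. Unset Printing Implicit Defensive.
Import Order.TTheory GRing.Theory Num.Theory.
Local Open Scope ring_scope.
Local Open Scope classical_set_scope.

Section Defs.
Variables (R : realType) (m n : nat).
Implicit Types (A : 'M[R]_(m, n)).

Definition colmax A (i : 'I_n) : R :=
  \big[Num.max/0]_(j < m | 0 < A j i) A j i.
Definition amin A (i : 'I_n) : R :=
  \big[Num.min/colmax A i]_(j < m | 0 < A j i) A j i.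
Definition ratio A (i : 'I_n) : R := colmax A i / amin A i.
Definition ncopies A (i : 'I_n) : nat :=
  `| Num.max 1%Z (Num.ceil (ln (ratio A i) / ln 2)) |%N.

(* column index type of Abar: pairs (i,l), i in [n], l in [n_i];
   the ordinal l : 'I_(n_i) stands for the copy number l+1 *)
Definition col_idx A := {i : 'I_n & 'I_(ncopies A i)}.

Definition copy_no A (c : col_idx A) : nat := (val (tagged c)).+1.

Definition Abar A (j : 'I_m) (c : col_idx A) : R :=
  Num.min (A j (tag c)) (2 ^+ copy_no c * amin A (tag c)).

Definition cover_feasible A (x : 'I_n -> R) : Prop :=
  (forall i, 0 <= x i) /\ (forall j, 1 <= \sum_i A j i * x i).

Definition OPT A : \bar R :=
  ereal_inf ((fun x : 'I_n -> R => ((\sum_i x i)%:E)%E) @` @cover_feasible A).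

Definition bar_feasible A (x : col_idx A -> R) : Prop :=
  [/\ (forall j, 1 <= \sum_c @Abar A j c * x c),
      (forall c, 0 <= x c) &
      (forall c, x c <= 2 / (2 ^+ @copy_no A c * amin A (tag c)))].

Definition OPTbar A : \bar R :=
  ereal_inf ((fun x : col_idx A -> R => ((\sum_c x c)%:E)%E) @` @bar_feasible A).

End Defs.
Arguments Abar {R m n} A j c.

From Pilot Require Import Defs.
From HB Require Import structures.
From mathcomp Require Import all_boot all_order all_algebra.
From mathcomp Require Import all_classical all_reals.
From mathcomp Require Import ereal exp.
Import Order.TTheory GRing.Theory Num.Theory.
Local Open Scope ring_scope.
Set Implicit Arguments. Unset Strict Implicit.

(* Splitting the columns can only shrink coefficients, so summing the copies of
   a feasible [xbar] gives a feasible [x] of the same cost: OPT <= OPTbar.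
   Conversely, given a feasible [x], first cap [x_i] at [1/a_i]; this keeps
   every product [A_ji x_i] at least [min(1, A_ji x_i)], which still covers
   each row.  Then put the capped value on the largest copy [l] with
   [2^(l-1) a_i x_i <= 1]: the upper bound [2/(2^l a_i)] holds, and either
   [A_ji <= 2^l a_i] (the coefficient is not truncated) or copy [l+1] exists
   and does not fit, so [2^l a_i x_i > 1]. *)

Lemma sum_ge1_min1 (R : realDomainType) (I : finType) (v w : I -> R) :
  1 <= \sum_i v i -> (forall i, 0 <= w i) ->
  (forall i, Num.min 1 (v i) <= w i) -> 1 <= \sum_i w i.
Proof.
move=> hv hw0 hw; have [/existsP[i hi] | ] := boolP [exists i, 1 <= v i].
  apply: le_trans (le_trans _ (hw i)) _; first by rewrite le_min lexx hi.
  by rewrite (bigD1 i) //= lerDl sumr_ge0.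
rewrite negb_exists => /forallP hlt; apply: le_trans hv _; apply: ler_sum => i _.
by apply: le_trans (hw i); rewrite le_min lexx ltW // ltNge hlt.
Qed.

Section Columns.
Variables (R : realType) (m n : nat) (A : 'M[R]_(m, n)).

Lemma le_colmax j i : 0 < A j i -> A j i <= colmax A i.
Proof. by move=> hji; rewrite /colmax (bigD1 j) //= le_max lexx. Qed.

Lemma amin_le j i : 0 < A j i -> amin A i <= A j i.
Proof. by move=> hji; rewrite /amin (bigD1 j) //= ge_min lexx. Qed.

Lemma amin_gt0 i : (exists j, 0 < A j i) -> 0 < amin A i.
Proof.
case=> j hj; apply: (big_ind (fun x => 0 < x)) => [|x y hx hy|//].
- exact: lt_le_trans hj (le_colmax hj).
- by rewrite lt_min hx hy.
Qed.

Lemma ceil_log_ratio_le_ncopies i : Num.ceil (ln (Defs.ratio A i) / ln 2) <= (ncopies A i)%:Z.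
Proof.
rewrite /ncopies; set z := Num.max _ _.
have z_ge0 : 0 <= z by rewrite le_max ler01.
by rewrite gez0_abs // /z le_max lexx orbT.
Qed.

Lemma ncopies_gt0 i : (0 < ncopies A i)%N.
Proof.
rewrite /ncopies -(ltz_nat 0) gez0_abs; first by rewrite lt_max.
by rewrite le_max ler01.
Qed.

Lemma colmax_le_expn_amin i :
  (exists j, 0 < A j i) -> colmax A i <= 2 ^+ ncopies A i * amin A i.
Proof.
move=> hj; have ha := amin_gt0 hj; case: hj => j hj.
have hc : 0 < colmax A i := lt_le_trans hj (le_colmax hj).
have ln2_gt0 : 0 < ln (2 : R) by rewrite ln_gt0 // ltr1n.
have hlog : ln (Defs.ratio A i) <= ln (2 ^+ ncopies A i : R).
  rewrite lnXn ?ltr0n // -(mulr_natl (ln 2)) -ler_pdivrMr //.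
  apply: le_trans (ceil_ge _) _.
  by rewrite -[(ncopies A i)%:R]/((ncopies A i)%:Z%:~R) ler_int ceil_log_ratio_le_ncopies.
move: hlog; rewrite ler_ln ?posrE ?exprn_gt0 ?divr_gt0 //.
by rewrite /Defs.ratio ler_pdivrMr.
Qed.

Definition copy i (l : 'I_(ncopies A i)) : col_idx A := Tagged _ l.

Lemma sum_col_idx (F : col_idx A -> R) :
  \sum_c F c = \sum_i \sum_(l < ncopies A i) F (copy l).
Proof.
rewrite (@sig_big_dep _ _ _ _ (fun i => 'I_(ncopies A i)) xpredT (fun _ => xpredT)
  (fun i l => F (copy l))).
by apply: eq_bigr => -[].
Qed.

Lemma Abar_le j c : Abar A j c <= A j (tag c).
Proof. by rewrite /Abar ge_min lexx. Qed.

End Columns.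

Lemma OPT_le_OPTbar (R : realType) m n (A : 'M[R]_(m, n)) :
  (OPT A <= OPTbar A)%E.
Proof.
apply/ereal_infP => _ [xb [hrow hge _] <-]; apply: ge_ereal_inf.
pose x i := \sum_(l < ncopies A i) xb (copy l).
exists (\sum_i x i)%:E; last by rewrite sum_col_idx.
exists x => //; split => [i | j]; first by apply: sumr_ge0 => l _; exact: hge.
apply: le_trans (hrow j) _; rewrite sum_col_idx; apply: ler_sum => i _.
by rewrite mulr_sumr; apply: ler_sum => l _; rewrite ler_wpM2r ?Abar_le.
Qed.

Section Concentrate.
Variables (R : realType) (m n : nat) (A : 'M[R]_(m, n)).
Hypothesis hA0 : forall j i, 0 <= A j i.
Hypothesis hcol : forall i, exists j, 0 < A j i.
Variable x : 'I_n -> R.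
Hypothesis hx0 : forall i, 0 <= x i.

Let amin_pos i : 0 < amin A i := amin_gt0 (hcol i).

Definition capped i := Num.min (x i) (amin A i)^-1.

Lemma capped_ge0 i : 0 <= capped i.
Proof. by rewrite le_min hx0 invr_ge0 ltW. Qed.

Lemma capped_le i : capped i <= x i.
Proof. by rewrite ge_min lexx. Qed.

Lemma min1_le_mul_capped j i : Num.min 1 (A j i * x i) <= A j i * capped i.
Proof.
have [hxa | hxa] := leP (x i) (amin A i)^-1.
  by rewrite /capped (min_l hxa) ge_min lexx orbT.
have [<- | hji] := eqVneq 0 (A j i); first by rewrite !mul0r ge_min lexx orbT.
have hpos : 0 < A j i by rewrite lt_def eq_sym hji hA0.
by rewrite /capped (min_r (ltW hxa)) ge_min ler_pdivlMr // mul1r amin_le.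
Qed.

Definition fits i (k : nat) := 2 ^+ k * amin A i * capped i <= 1.

Lemma fits0 i : fits i 0.
Proof.
rewrite /fits expr0 mul1r -(mulfV (lt0r_neq0 (amin_pos i))).
by rewrite ler_wpM2l ?(ltW (amin_pos i)) // /capped ge_min lexx orbT.
Qed.

Definition top_copy i : 'I_(ncopies A i) :=
  [arg max_(k > Ordinal (ncopies_gt0 A i) | fits i k) (k : nat)].

Lemma top_copy_fits i : fits i (top_copy i).
Proof. by rewrite /top_copy; case: arg_maxnP => //; exact: fits0. Qed.

Lemma top_copy_max i (k : 'I_(ncopies A i)) : fits i k -> (k <= top_copy i)%N.
Proof. by rewrite /top_copy; case: arg_maxnP => [|l _]; [exact: fits0 | apply]. Qed.

Lemma next_copy_overflows i :
  ((top_copy i).+1 < ncopies A i)%N -> 1 < 2 ^+ (top_copy i).+1 * amin A i * capped i.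
Proof.
move=> hlt; rewrite ltNge; apply/negP => hfit.
by have := top_copy_max (k := Ordinal hlt) hfit; rewrite ltnn.
Qed.

Lemma min1_le_Abar_top j i :
  Num.min 1 (A j i * x i) <= Abar A j (copy (top_copy i)) * capped i.
Proof.
rewrite /Abar /copy_no /=.
have [hle | hgt] := leP (A j i) (2 ^+ (top_copy i).+1 * amin A i).
  exact: min1_le_mul_capped.
have hpos : 0 < A j i.
  by apply: le_lt_trans hgt; rewrite mulr_ge0 ?exprn_ge0 ?(ltW (amin_pos i)).
have hlt : ((top_copy i).+1 < ncopies A i)%N.
  rewrite ltnNge; apply/negP => hN; move: hgt; apply/negP; rewrite -leNgt.
  apply: le_trans (le_colmax hpos) (le_trans (colmax_le_expn_amin (hcol i)) _).
  by rewrite ler_wpM2r ?(ltW (amin_pos i)) // ler_eXn2l ?ltr1n.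
by rewrite ge_min (ltW (next_copy_overflows hlt)).
Qed.

Definition concentrate (c : col_idx A) :=
  if tagged c == top_copy (tag c) then capped (tag c) else 0.

Lemma concentrate_sum_copies i F :
  \sum_(l < ncopies A i) F (copy l) * concentrate (copy l) =
  F (copy (top_copy i)) * capped i.
Proof.
rewrite (bigD1 (top_copy i)) //= big1 ?addr0 /concentrate /= ?eqxx // => l hl.
by rewrite (negbTE hl) mulr0.
Qed.

Lemma concentrate_le_bound c :
  concentrate c <= 2 / (2 ^+ copy_no c * amin A (tag c)).
Proof.
case: c => i l; rewrite /concentrate /copy_no /=.
have hd k : 0 < 2 ^+ k * amin A i by rewrite mulr_gt0 ?exprn_gt0.
case: eqP => [-> | _]; last by rewrite divr_ge0 ?ltW.
rewrite ler_pdivlMr // exprS -!mulrA mulrCA ger_pMr // mulrC.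
exact: top_copy_fits.
Qed.

Lemma concentrate_feasible : cover_feasible A x -> bar_feasible concentrate.
Proof.
case=> _ hrow; split => [j | c | c]; last exact: concentrate_le_bound.
- rewrite sum_col_idx; under eq_bigr do rewrite concentrate_sum_copies.
  apply: sum_ge1_min1 (hrow j) _ (min1_le_Abar_top j) => i.
  by rewrite mulr_ge0 ?capped_ge0 // le_min hA0 mulr_ge0 ?exprn_ge0 ?ltW.
- by rewrite /concentrate; case: ifP => // _; exact: capped_ge0.
Qed.

Lemma concentrate_cost : \sum_c concentrate c <= \sum_i x i.
Proof.
rewrite sum_col_idx; apply: ler_sum => i _; apply: le_trans (capped_le i).
have := concentrate_sum_copies i (fun _ => 1).
by under eq_bigr do rewrite mul1r; rewrite mul1r => ->.
Qed.

End Concentrate.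
Arguments concentrate {R m n} A x c.

Lemma OPTbar_le_OPT (R : realType) m n (A : 'M[R]_(m, n))
  (hA0 : forall j i, 0 <= A j i) (hcol : forall i, exists j, 0 < A j i) :
  (OPTbar A <= OPT A)%E.
Proof.
apply/ereal_infP => _ [x hx <-]; apply: ge_ereal_inf.
exists (\sum_c concentrate A x c)%:E.
  by exists (concentrate A x); first exact (concentrate_feasible hA0 hcol (proj1 hx) hx).
by rewrite lee_fin concentrate_cost.
Qed.

Theorem lemma1 (R : realType) (m n : nat) (A : 'M[R]_(m, n))
  (hA0 : forall j i, 0 <= A j i)
  (hcol : forall i, exists j, 0 < A j i) :
  OPT A = OPTbar A.
Proof.
by apply/eqP; rewrite eq_le OPT_le_OPTbar OPTbar_le_OPT.
Qed.
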